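(* Let $\Omega$ be a finite set with $n=|\Omega|$, $V_\Omega=\mathbb{R}^\Omega$, and $V_\Upsilon,V_\Gamma\le V_\Omega$. Let $\mathcal{P}$, $\mathcal{Q}$, $\mathcal{R}$ be orthogonal decompositions of $V_\Omega$, $V_\Upsilon$, $V_\Gamma$, respectively, each containing $\mathbf{P}_0=\mathbf{Q}_0=\mathbf{R}_0=n^{-1}\mathbf{J}$, such that $\mathcal{Q}$ and $\mathcal{R}$ are both structure balanced in relation to $\mathcal{P}$. Suppose that either (A) $\mathbf{QPR}=\mathbf{0}$ for all $\mathbf{P}\in\mathcal{P}\setminus\{\mathbf{P}_0\}$, all $\mathbf{Q}\in\mathcal{Q}$ and all $\mathbf{R}\in\mathcal{R}$; or (B) for all $\mathbf{P}\in\mathcal{P}$, $\mathbf{Q}\in\mathcal{Q}$ and $\mathbf{R}\in\mathcal{R}$, if $\mathbf{PQ}$ and $\mathbf{PR}$ are both nonzero then $\mathbf{P}\vartriangleright\mathbf{Q}=\mathbf{P}$ or $\mathbf{P}\vartriangleright\mathbf{R}=\mathbf{P}$. Then the decomposition $\mathcal{P}\vartriangleright\mathcal{Q}$ is compatible with the decomposition $\mathcal{P}\vartriangleright\mathcal{R}$, i.e. $\mathbf{BC}=\mathbf{CB}$ for all $\mathbf{B}\in\mathcal{P}\vartriangleright\mathcal{Q}$ and $\mathbf{C}\in\mathcal{P}\vartriangleright\mathcal{R}$.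
   Context: $\mathbf{J}$ is the $n\times n$ all-ones matrix. $V_\Omega$ carries the standard inner product; all matrices are $\Omega\times\Omega$. An orthogonal decomposition of a subspace $W\le V_\Omega$ is a finite set of nonzero symmetric idempotent matrices that are mutually orthogonal and whose sum is the orthogonal projector onto $W$; zero matrices are discarded from listed decompositions. For projectors $\mathbf{A},\mathbf{B}$: $\mathbf{B}$ has first-order balance in relation to $\mathbf{A}$ if $\mathbf{BAB}=\lambda_{\mathbf{AB}}\mathbf{B}$ for a scalar $\lambda_{\mathbf{AB}}$; $\lambda_{\mathbf{AB}}=0$ iff $\mathbf{AB}=\mathbf{0}$; if $\lambda_{\mathbf{AB}}\ne0$, $\mathbf{A}\vartriangleright\mathbf{B}=\lambda_{\mathbf{AB}}^{-1}\mathbf{ABA}$. $\mathcal{B}$ is structure balanced in relation to $\mathcal{A}$ if every $\mathbf{B}\in\mathcal{B}$ has first-order balance in relation to every $\mathbf{A}\in\mathcal{A}$, and $\mathbf{B}_1\mathbf{A}\mathbf{B}_2=\mathbf{0}$ for all $\mathbf{A}\in\mathcal{A}$ and distinct $\mathbf{B}_1,\mathbf{B}_2\in\mathcal{B}$. Then $\mathbf{A}\vdash\mathcal{B}=\mathbf{A}-\sum'_{\mathbf{B}}\mathbf{A}\vartriangleright\mathbf{B}$ (sum over $\mathbf{B}$ with $\lambda_{\mathbf{AB}}\ne0$) and $\mathcal{A}\vartriangleright\mathcal{B}=\{\mathbf{A}\vartriangleright\mathbf{B}:\mathbf{A}\in\mathcal{A},\mathbf{B}\in\mathcal{B},\lambda_{\mathbf{AB}}\neq0\}\cup\{\mathbf{A}\vdash\mathcal{B}:\mathbf{A}\in\mathcal{A}\}$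 (zeros discarded). *)

(* Matrices over a real field R, indexed by 'I_n (Omega = 'I_n). *)
From HB Require Import structures.
From mathcomp Require Import all_boot all_order all_algebra.
From Stdlib Require Import ClassicalEpsilon.
Set Implicit Arguments. Unset Strict Implicit. Unset Printing Implicit Defensive.
Import Order.TTheory GRing.Theory Num.Theory.
Local Open Scope ring_scope.

Section Defs.
Variables (R : realFieldType) (n : nat).
Notation M := 'M[R]_n.

Definition avg_proj : M := (n%:R)^-1 *: const_mx 1.

(* E is the orthogonal projector onto the subspace W (= row space of W) *)
Definition orth_proj (E W : M) : Prop :=
  E^T = E /\ E *m E = E /\ (E == W)%MS.

Definition orth_decomp (s : seq M) (W : M) : Prop :=
  [/\ uniq s,
      (forall E, E \in s -> E != 0 /\ E^T = E /\ E *m E = E),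
      (forall E F, E \in s -> F \in s -> E != F -> E *m F = 0)
    & orth_proj (\sum_(E <- s) E) W].

Definition fo_balance (A B : M) : Prop :=
  exists l : R, B *m A *m B = l *: B.

Definition lam (A B : M) : R :=
  epsilon (inhabits (0 : R)) (fun l => B *m A *m B = l *: B).

Definition tri (A B : M) : M := (lam A B)^-1 *: (A *m B *m A).

Definition struct_balanced (Bs As : seq M) : Prop :=
  (forall A B, A \in As -> B \in Bs -> fo_balance A B) /\
  (forall A B1 B2, A \in As -> B1 \in Bs -> B2 \in Bs -> B1 != B2 ->
     B1 *m A *m B2 = 0).

Definition turnstile (A : M) (Bs : seq M) : M :=
  A - \sum_(B <- Bs | lam A B != 0) tri A B.

Definition decomp_tri (As Bs : seq M) : seq M :=
  [seq X <- [seq tri A B | A <- As, B <- [seq B <- Bs | lam A B != 0]]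
            ++ [seq turnstile A Bs | A <- As] | X != 0].

End Defs.

(* Every member of P |> Q built from P lies in the corner P M P, and two
   corners P1 M P1, P2 M P2 with P1 P2 = 0 annihilate each other; so only
   members built from the same P need attention.  Inside one corner they are
   combinations of P and of the compressions P Q P, P R P, so it suffices that
   these compressions commute.  Under (A) either P = n^-1 J, whose compressions
   are all multiples of P, or P Q P . P R P = P (Q P R) P = 0 and, by symmetry,
   also P R P . P Q P = 0.  Under (B) one of the two compressions is a multiple
   of P (or P Q = 0 or P R = 0), and P commutes with its corner. *)
From mathcomp Require Import all_boot all_order all_algebra.
Import GRing.Theory Num.Theory.
Local Open Scope ring_scope.
Set Implicit Arguments. Unset Strict Implicit.

Section Corners.
Variables (R : comRingType) (n : nat).
Implicit Types (P Q S X Y B C : 'M[R]_n).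

Lemma comm_mxZ a b B C : comm_mx B C -> comm_mx (a *: B) (b *: C).
Proof. by rewrite /comm_mx -!scalemxAl -!scalemxAr !scalerA mulrC => ->. Qed.

Definition in_corner P B := P *m B = B /\ B *m P = B.

Lemma in_corner_idem P : P *m P = P -> in_corner P P.
Proof. by []. Qed.

Lemma in_corner_compress P X : P *m P = P -> in_corner P (P *m X *m P).
Proof. by move=> PP; split; [rewrite !mulmxA PP | rewrite -mulmxA PP]. Qed.

Lemma in_cornerZ P a B : in_corner P B -> in_corner P (a *: B).
Proof. by rewrite /in_corner -scalemxAr -scalemxAl => -[-> ->]. Qed.

Lemma in_cornerB P B C :
  in_corner P B -> in_corner P C -> in_corner P (B - C).
Proof. by rewrite /in_corner mulmxBl mulmxBr => -[-> ->] [-> ->]. Qed.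

Lemma in_corner_sum (I : Type) P (r : seq I) (p : pred I) (F : I -> 'M[R]_n) :
  (forall i, p i -> in_corner P (F i)) -> in_corner P (\sum_(i <- r | p i) F i).
Proof.
move=> FP; split.
- by rewrite mulmx_sumr; apply: eq_bigr => i /FP[].
- by rewrite mulmx_suml; apply: eq_bigr => i /FP[].
Qed.

Lemma comm_mx_corner P B : in_corner P B -> comm_mx P B.
Proof. by rewrite /comm_mx => -[-> ->]. Qed.

Lemma comm_mx_orth_corner P1 P2 B C :
  P1 *m P2 = 0 -> P2 *m P1 = 0 -> in_corner P1 B -> in_corner P2 C ->
  comm_mx B C.
Proof.
move=> P12 P21 [B1 B2] [C1 C2].
rewrite /comm_mx -B2 -C1 -C2 -B1 -!mulmxA (mulmxA P1 P2) (mulmxA P2 P1).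
by rewrite P12 P21 !mul0mx !mulmx0.
Qed.

Lemma comm_mx_compress_multiple P X Y :
  P *m P = P -> (exists a, P *m X *m P = a *: P) ->
  comm_mx (P *m X *m P) (P *m Y *m P).
Proof.
move=> PP [a ->]; rewrite -[P *m Y *m P]scale1r.
exact/comm_mxZ/comm_mx_corner/in_corner_compress.
Qed.

Lemma comm_mx_compress_orth P Q S :
  P^T = P -> Q^T = Q -> S^T = S -> P *m P = P -> Q *m P *m S = 0 ->
  comm_mx (P *m Q *m P) (P *m S *m P).
Proof.
move=> PT QT ST PP QPS.
have SPQ : S *m P *m Q = 0 by rewrite -QT -ST -PT -!trmx_mul mulmxA QPS trmx0.
have compressM X Y : P *m X *m P *m (P *m Y *m P) = P *m (X *m P *m Y) *m P.
  by rewrite !mulmxA -(mulmxA _ P P) PP.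
by rewrite /comm_mx !compressM QPS SPQ mulmx0 mul0mx.
Qed.

End Corners.

Section TriDecomposition.
Variables (R : realFieldType) (n : nat).
Implicit Types (P Q S X Y B C : 'M[R]_n) (Qs : seq 'M[R]_n).

Lemma in_corner_tri P Q : P *m P = P -> in_corner P (tri P Q).
Proof. by move=> PP; apply/in_cornerZ/in_corner_compress. Qed.

Lemma in_corner_turnstile P Qs : P *m P = P -> in_corner P (turnstile P Qs).
Proof.
move=> PP; apply: in_cornerB; first exact: in_corner_idem.
by apply: in_corner_sum => Q _; apply: in_corner_tri.
Qed.

Definition decomp_tri_at P Qs : seq 'M[R]_n :=
  turnstile P Qs :: [seq tri P Q | Q <- Qs].

Lemma mem_decomp_tri Ps Qs B : B \in decomp_tri Ps Qs ->
  exists2 P, P \in Ps & B \in decomp_tri_at P Qs.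
Proof.
rewrite mem_filter mem_cat => /andP[_ /orP[]].
- case/allpairsPdep=> P [Q [PPs]]; rewrite mem_filter => /andP[_ QQs] ->.
  by exists P => //; rewrite inE map_f ?orbT.
- by case/mapP=> P PPs ->; exists P; rewrite ?mem_head.
Qed.

Lemma in_corner_decomp_tri_at P Qs B :
  P *m P = P -> B \in decomp_tri_at P Qs -> in_corner P B.
Proof.
move=> PP; rewrite inE => /orP[/eqP->|/mapP[Q _ ->]].
  exact: in_corner_turnstile.
exact: in_corner_tri.
Qed.

Lemma comm_mx_turnstile X P Qs :
  comm_mx X P -> (forall Q, Q \in Qs -> comm_mx X (tri P Q)) ->
  comm_mx X (turnstile P Qs).
Proof.
move=> XP XQs; apply: comm_mxB => //; rewrite big_seq_cond.
by apply: comm_mx_sum => Q /andP[/XQs].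
Qed.

Lemma comm_mx_decomp_tri_at P Qs Rs B C :
  P *m P = P ->
  (forall Q S, Q \in Qs -> S \in Rs -> comm_mx (P *m Q *m P) (P *m S *m P)) ->
  B \in decomp_tri_at P Qs -> C \in decomp_tri_at P Rs -> comm_mx B C.
Proof.
move=> PP compressP BP CP.
have triP Q S : Q \in Qs -> S \in Rs -> comm_mx (tri P Q) (tri P S).
  by move=> QQs SRs; apply/comm_mxZ/compressP.
have commB S : S \in Rs -> comm_mx B (tri P S).
  move=> SRs; move: BP; rewrite inE => /orP[/eqP->|/mapP[Q QQs ->]].
  - apply/comm_mx_sym/comm_mx_turnstile.
      exact/comm_mx_sym/comm_mx_corner/in_corner_tri.
    by move=> Q QQs; apply/comm_mx_sym/triP.
  - exact: triP.
move: CP; rewrite inE => /orP[/eqP->|/mapP[S SRs ->]]; last exact: commB.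
apply: comm_mx_turnstile => //.
exact/comm_mx_sym/comm_mx_corner/(in_corner_decomp_tri_at PP BP).
Qed.

Lemma compress_tri_id P Y :
  P != 0 -> tri P Y = P -> P *m Y *m P = lam P Y *: P.
Proof.
move=> P0 triP; have [lam0|lamN0] := eqVneq (lam P Y) 0.
  by move: P0; rewrite -triP /tri lam0 invr0 scale0r eqxx.
transitivity (lam P Y *: tri P Y); last by rewrite triP.
by rewrite /tri scalerA divff // scale1r.
Qed.

Lemma comm_mx_compress_tri_id P Q S :
  P != 0 -> P *m P = P ->
  (P *m Q != 0 -> P *m S != 0 -> tri P Q = P \/ tri P S = P) ->
  comm_mx (P *m Q *m P) (P *m S *m P).
Proof.
move=> P0 PP triP.
have [PQ0|PQ] := eqVneq (P *m Q) 0; first by rewrite PQ0 mul0mx; apply: comm0mx.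
have [PS0|PS] := eqVneq (P *m S) 0; first by rewrite PS0 mul0mx; apply: comm_mx0.
case: (triP PQ PS) => /(compress_tri_id P0) compressP.
  by apply: comm_mx_compress_multiple; last by exists (lam P Q).
by apply/comm_mx_sym/comm_mx_compress_multiple; last by exists (lam P S).
Qed.

Lemma avg_proj_compress X : exists a,
  avg_proj R n *m X *m avg_proj R n = a *: avg_proj R n.
Proof.
have JXJ : const_mx 1 *m X *m const_mx 1 =
    (\sum_i \sum_j X i j) *: (const_mx 1 : 'M[R]_n).
  apply/matrixP => a b; rewrite !mxE mulr1 [RHS]exchange_big.
  apply: eq_bigr => k _; rewrite !mxE mulr1.
  by apply: eq_bigr => i _; rewrite !mxE mul1r.
exists ((n%:R)^-1 * \sum_i \sum_j X i j).
rewrite /avg_proj -scalemxAl -scalemxAr -scalemxAl JXJ !scalerA.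
by rewrite mulrAC.
Qed.

End TriDecomposition.

Theorem theorem3 (R : realFieldType) (n : nat)
  (Ups Gam : 'M[R]_n) (Ps Qs Rs : seq 'M[R]_n) :
  orth_decomp Ps 1%:M ->
  orth_decomp Qs Ups ->
  orth_decomp Rs Gam ->
  avg_proj R n \in Ps ->
  avg_proj R n \in Qs ->
  avg_proj R n \in Rs ->
  struct_balanced Qs Ps ->
  struct_balanced Rs Ps ->
  ((forall P Q S, P \in Ps -> P != avg_proj R n -> Q \in Qs -> S \in Rs ->
      Q *m P *m S = 0)
   \/
   (forall P Q S, P \in Ps -> Q \in Qs -> S \in Rs ->
      P *m Q != 0 -> P *m S != 0 -> tri P Q = P \/ tri P S = P)) ->
  forall B C, B \in decomp_tri Ps Qs -> C \in decomp_tri Ps Rs ->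
    B *m C = C *m B.
Proof.
move=> [_ Ps_proj Ps_orth _] [_ Qs_proj _ _] [_ Rs_proj _ _] _ _ _ _ _ hyp.
move=> B C /mem_decomp_tri[P1 P1Ps BP1] /mem_decomp_tri[P2 P2Ps CP2].
have [P1_0 [P1T P1P1]] := Ps_proj _ P1Ps.
have [_ [_ P2P2]] := Ps_proj _ P2Ps.
have [P12|P12] := eqVneq P1 P2; last first.
  apply: (comm_mx_orth_corner (Ps_orth _ _ P1Ps P2Ps P12)).
  - by apply: Ps_orth; rewrite 1?eq_sym.
  - exact: in_corner_decomp_tri_at BP1.
  - exact: in_corner_decomp_tri_at CP2.
rewrite -P12 in CP2.
apply: (comm_mx_decomp_tri_at P1P1 _ BP1 CP2) => Q S QQs SRs.
case: hyp => [orthP | triP]; last first.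
  exact: comm_mx_compress_tri_id P1_0 P1P1 (triP _ _ _ P1Ps QQs SRs).
have [P1J|P1J] := eqVneq P1 (avg_proj R n).
  by apply: comm_mx_compress_multiple => //; rewrite P1J; apply: avg_proj_compress.
have [_ [QT _]] := Qs_proj _ QQs; have [_ [ST _]] := Rs_proj _ SRs.
exact: comm_mx_compress_orth (orthP _ _ _ P1Ps P1J QQs SRs).
Qed.
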